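(* Let $X$ be a real normed linear space, let $\Omega_1,\Omega_2\subset X$ be convex, and let $\bar x\in\Omega_1\cap\Omega_2$. Suppose there exists a bounded convex neighborhood $V$ of $\bar x$ such that $$0\in\operatorname{int}\big(\Omega_1-(\Omega_2\cap V)\big).$$ Then $$N(\bar x;\Omega_1\cap\Omega_2)=N(\bar x;\Omega_1)+N(\bar x;\Omega_2).$$
   Context: For a convex set $\Omega\subset X$ and $\bar x\in\Omega$, the normal cone is $N(\bar x;\Omega)=\{x^*\in X^*\mid \langle x^*,x-\bar x\rangle\le0\ \forall x\in\Omega\}$, where $X^*$ is the topological dual of $X$. For sets $A,B$, $A-B=\{a-b\mid a\in A,b\in B\}$; $\operatorname{int}$ is the topological interior. *)

From HB Require Import structures.
From mathcomp Require Import all_boot all_order all_algebra.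
From mathcomp Require Import all_classical all_reals all_analysis.
Set Implicit Arguments. Unset Strict Implicit. Unset Printing Implicit Defensive.
Import Order.TTheory GRing.Theory Num.Theory.
Import numFieldNormedType.Exports.
Local Open Scope classical_set_scope.
Local Open Scope ring_scope.

Definition is_dual_elt (R : realType) (X : normedModType R) (f : X -> R) : Prop :=
  (forall (a : R) (x y : X), f (a *: x + y) = a * f x + f y) /\ continuous f.

Definition normal_cone (R : realType) (X : normedModType R)
    (xbar : X) (Omega : set X) : set (X -> R) :=
  [set f | is_dual_elt f /\ forall x, Omega x -> f (x - xbar) <= 0].

Definition set_sum_fun (R : realType) (X : normedModType R)
    (A B : set (X -> R)) : set (X -> R) :=
  [set h | exists f g, A f /\ B g /\ h = (fun x => f x + g x)].

Definition set_diff_mink (R : realType) (X : normedModType R)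
    (A B : set X) : set X :=
  [set z | exists a b, A a /\ B b /\ z = a - b].

From HB Require Import structures.
From mathcomp Require Import all_boot all_order all_algebra.
From mathcomp Require Import all_classical all_reals all_analysis.
From mathcomp Require Import ring lra.
Import Order.TTheory GRing.Theory Num.Theory.
Import numFieldNormedType.Exports.
Local Open Scope classical_set_scope.
Local Open Scope ring_scope.

(* Given h in N(xbar; Omega1 /\ Omega2), consider the convex cone in X * R generated
   by the points (c - d, t) with c in Omega1, d in Omega2 /\ V and t >= h (xbar - d).
   Since 0 is interior to Omega1 - (Omega2 /\ V), the cone has points above every z;
   since h is normal to the intersection, its points above 0 have height t >= 0.
   The cone form of the Hahn-Banach dominated extension theorem then yields a linear
   l below the cone: l (c - d) <= h (xbar - d).  Boundedness of h on V and the
   interior ball make l continuous; d = xbar gives l in N(xbar; Omega1), and c = xbar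
   gives h - l in N(xbar; Omega2 /\ V), which is N(xbar; Omega2) as V is a
   neighborhood of xbar. *)

Section ConeHahnBanach.
Variables (R : realType) (X : lmodType R) (P : set (X * R)).
Hypothesis P_add : forall z t w u, P (z, t) -> P (w, u) -> P (z + w, t + u).
Hypothesis P_scale : forall a z t, 0 < a -> P (z, t) -> P (a *: z, a * t).
Hypothesis P_total : forall z, exists t, P (z, t).
Hypothesis P_ge0 : forall t, P (0, t) -> 0 <= t.
(* P is the epigraph of the sublinear functional z |-> inf {t | P (z, t)}. *)
Arguments P_add {z t w u}.
Arguments P_scale {a z t}.

Definition dominated_linear_graph (A : set (X * R)) :=
  [/\ forall a x r y s, A (x, r) -> A (y, s) -> A (a *: x + y, a * r + s),
      forall x r s, A (x, r) -> A (x, s) -> r = s &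
      forall x r t, A (x, r) -> P (x, t) -> r <= t].

Lemma dominated_linear_graph_bigcup (F : set (set (X * R))) :
  F `<=` dominated_linear_graph -> total_on F subset ->
  dominated_linear_graph (\bigcup_(A in F) A).
Proof.
move=> FG Ftot; split.
- move=> a x r y s [A FA Axr] [B FB Bys].
  have [AB|BA] := Ftot A B FA FB.
  + by exists B => //; have [combB _ _] := FG B FB; exact: combB (AB _ Axr) Bys.
  + by exists A => //; have [combA _ _] := FG A FA; exact: combA Axr (BA _ Bys).
- move=> x r s [A FA Axr] [B FB Bxs].
  have [AB|BA] := Ftot A B FA FB.
  + by have [_ funB _] := FG B FB; exact: funB (AB _ Axr) Bxs.
  + by have [_ funA _] := FG A FA; exact: funA Axr (BA _ Bxs).
- by move=> x r t [A FA Axr] Pxt; have [_ _ domA] := FG A FA; exact: domA Axr Pxt.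
Qed.

Section OneStepExtension.
Variables (A : set (X * R)) (x0 : X).
Hypotheses (graphA : dominated_linear_graph A) (A00 : A (0, 0)).
Hypothesis x0_outside : forall r, ~ A (x0, r).

Let A_scale x r a : A (x, r) -> A (a *: x, a * r).
Proof.
by case: graphA => combA _ _ Axr; have := combA a _ _ _ _ Axr A00; rewrite !addr0.
Qed.

Let A_add x r y s : A (x, r) -> A (y, s) -> A (x + y, r + s).
Proof.
by case: graphA => combA _ _ Axr Ays; have := combA 1 _ _ _ _ Axr Ays; rewrite scale1r mul1r.
Qed.

Arguments A_scale {x r}.
Arguments A_add {x r y s}.

Lemma extension_slope :
  exists c, forall y r t tau, A (y, r) -> P (y + t *: x0, tau) -> r + t * c <= tau.
Proof.
(* Subadditivity of P puts every [r - t] with [A (y, r)], [P (y - x0, t)] below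
   every [tau - r'] with [A (y', r')], [P (y' + x0, tau)]; any c in between works. *)
case: graphA => _ _ domA.
pose S := [set v | exists y r t, [/\ A (y, r), P (y - x0, t) & v = r - t]].
have S_ub y r tau : A (y, r) -> P (y + x0, tau) -> ubound S (tau - r).
  move=> Ayr Ptau _ [z [u [t [Azu Pt ->]]]].
  have := P_add Pt Ptau; rewrite addrACA addNr addr0.
  move=> /(domA _ _ _ (A_add Azu Ayr)); lra.
have S_sup : has_sup S.
  have [tm Ptm] := P_total (0 - x0); have [tp Ptp] := P_total (0 + x0).
  by split; [exists (0 - tm), 0, 0, tm | exists (tp - 0); exact: S_ub Ptp].
exists (sup S) => y r t tau Ayr Ptau.
have rescale a : 0 < a -> P (a *: y + (a * t) *: x0, a * tau).
  by move=> a_gt0; rewrite -scalerA -scalerDr; exact: P_scale.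
have [t_lt0|t_gt0|t0] := ltgtP t 0; last first.
- by move: Ptau; rewrite t0 scale0r mul0r !addr0; exact: domA.
- have a_gt0 : 0 < t^-1 by rewrite invr_gt0.
  have := rescale _ a_gt0; rewrite mulVf ?gt_eqF // scale1r.
  move=> /(S_ub _ _ _ (A_scale t^-1 Ayr)) /(ge_sup S_sup.1).
  rewrite -mulrBr ler_pdivlMl //; lra.
- have a_gt0 : 0 < (- t)^-1 by rewrite invr_gt0 oppr_gt0.
  have aN1 : (- t)^-1 * t = -1 by rewrite invrN mulNr mulVf ?lt_eqF.
  have := rescale _ a_gt0; rewrite aN1 scaleN1r => Pa.
  have : S ((- t)^-1 * r - (- t)^-1 * tau).
    by exists ((- t)^-1 *: y), ((- t)^-1 * r), ((- t)^-1 * tau); split => //; exact: A_scale.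
  move=> /(ub_le_sup S_sup.2); rewrite -mulrBr ler_pdivrMl ?oppr_gt0 //; lra.
Qed.

Lemma extension_coord_unique {y1 r1 t1 y2 r2 t2} :
  A (y1, r1) -> A (y2, r2) -> y1 + t1 *: x0 = y2 + t2 *: x0 -> t1 = t2.
Proof.
move=> A1 A2 e12; apply: contrapT => /eqP; rewrite -subr_eq0 => t12.
apply: (x0_outside ((t1 - t2)^-1 * (r2 - r1))).
have y21 : y2 - y1 = (t1 - t2) *: x0.
  by rewrite scalerBl; apply/eqP; rewrite subr_eq addrAC eq_sym subr_eq -e12 addrC.
have -> : x0 = (t1 - t2)^-1 *: (y2 - y1) by rewrite y21 scalerA mulVf ?scale1r.
by apply: A_scale; have := A_add A2 (A_scale (-1) A1); rewrite scaleN1r mulN1r.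
Qed.

Lemma dominated_linear_graph_extend : exists B, A `<` B /\ dominated_linear_graph B.
Proof.
have [c c_dom] := extension_slope; case: graphA => combA funA _.
pose B := [set p | exists y r t, A (y, r) /\ p = (y + t *: x0, r + t * c)].
have AB : A `<=` B by move=> [y r] Ayr; exists y, r, 0; rewrite scale0r mul0r !addr0.
exists B; split; [split => // BA | split].
- by apply: (x0_outside c); apply: BA; exists 0, 0, 1; rewrite scale1r mul1r !add0r.
- move=> a _ _ _ _ [y1 [r1 [t1 [A1 [-> ->]]]]] [y2 [r2 [t2 [A2 [-> ->]]]]].
  exists (a *: y1 + y2), (a * r1 + r2), (a * t1 + t2); split; first exact: combA.
  congr (_, _); last by ring.
  by rewrite scalerDr scalerDl scalerA addrACA.
- move=> _ _ _ [y1 [r1 [t1 [A1 [-> ->]]]]] [y2 [r2 [t2 [A2 [e12 ->]]]]].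
  have t12 := extension_coord_unique A1 A2 e12; rewrite t12 in e12 *.
  by move/addIr: e12 => y12; rewrite y12 in A1; rewrite (funA _ _ _ A1 A2).
- by move=> _ _ tau [y [r [t [Ayr [-> ->]]]]]; exact: c_dom.
Qed.
End OneStepExtension.
Arguments dominated_linear_graph_extend {A x0}.

Theorem cone_hahn_banach : exists f : X -> R, scalar f /\ forall z t, P (z, t) -> f z <= t.
Proof.
have [A [graphA Amax]] := Zorn_bigcup dominated_linear_graph_bigcup.
have [combA funA domA] := graphA.
have A00 : A (0, 0).
  apply: contrapT => nA00; apply: (Amax [set (0, 0)]).
    split=> [[x r] Axr|/(_ (0, 0) erefl)//]; exfalso; apply: nA00.
    by have := combA (-1) _ _ _ _ Axr Axr; rewrite scaleN1r mulN1r !addNr.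
  split=> [a _ _ _ _ [-> ->] [-> ->]|_ _ _ [_ ->] [_ ->]//|_ _ t [-> ->]].
  - by rewrite scaler0 mulr0 !addr0.
  - exact: P_ge0.
have A_total x : exists r, A (x, r).
  apply: contrapT => x_outside.
  have [B [AB graphB]] :=
    dominated_linear_graph_extend graphA A00 ((forallNP _).2 x_outside).
  exact: Amax AB graphB.
pose f x := xget 0 [set r | A (x, r)].
have Af x : A (x, f x) by exact: (xgetPex 0 (A_total x)).
exists f; split=> [a x y|z t]; first exact: funA (Af _) (combA _ _ _ _ _ (Af x) (Af y)).
exact: domA (Af z).
Qed.
End ConeHahnBanach.
Arguments cone_hahn_banach {R X P}.

Section ContinuousScalar.
Variables (R : realType) (X : normedModType R) (f : X -> R).
Hypothesis f_scalar : scalar f.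

Let F : {linear X -> R^o} :=
  HB.pack_for {linear X -> R^o} f (GRing.isLinear.Build R X R^o *:%R f f_scalar).

Lemma scalar_ub_continuous r B :
  0 < r -> (forall z, `|z| < r -> f z <= B) -> continuous f.
Proof.
move=> r_gt0 fB.
suff Fbd : bounded_near F (nbhs (0 : X)) by exact: bounded_linear_continuous Fbd.
have fN z : f (- z) = - f z by exact: (linearN F).
rewrite /bounded_near; near=> M; apply/nbhs_norm0P; exists r => //= z zr.
have fzB : f z <= B := fB z zr.
have := fB (- z); rewrite normrN fN => /(_ zr) fNzB.
have BM : B <= M by near: M; apply: nbhs_pinfty_ge; rewrite num_real.
by rewrite /= ler_norml lerNl (le_trans fzB BM) (le_trans fNzB BM).
Unshelve. all: by end_near.
Qed.

Lemma continuous_scalar_bounded (A : set X) :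
  continuous f -> bounded_set A -> exists M, forall x, A x -> `|f x| <= M.
Proof.
move=> /(linear_bounded_continuous F).2 /(linear_boundedP F).1 [k [_ fk]] [K [_ AK]].
have kk : k < `|k| + 1 by rewrite (le_lt_trans (ler_norm k)) ?ltrDl.
have KK : K < `|K| + 1 by rewrite (le_lt_trans (ler_norm K)) ?ltrDl.
exists ((`|k| + 1) * (`|K| + 1)) => x Ax.
apply: le_trans (fk _ kk x) _; apply: ler_wpM2l; first by rewrite addr_ge0.
exact: AK.
Qed.

End ContinuousScalar.
Arguments scalar_ub_continuous {R X f}.
Arguments continuous_scalar_bounded {R X f}.

Lemma convex_comb {R : numDomainType} {X : lmodType R} {A : set X} {l m : R} {x y : X} :
  convex_set A -> A x -> A y -> 0 <= l -> 0 <= m -> l + m = 1 -> A (l *: x + m *: y).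
Proof.
move=> cA Ax Ay l_ge0 m_ge0 lm.
have l_le1 : l <= 1 by rewrite -lm lerDl.
have -> : m = 1 - l by rewrite -lm addrAC subrr add0r.
exact/set_mem/(cA x y (Itv01 l_ge0 l_le1))/mem_set/Ay/mem_set.
Qed.

Lemma convex_setI {R : numDomainType} {X : lmodType R} {A B : set X} :
  convex_set A -> convex_set B -> convex_set (A `&` B).
Proof.
move=> cA cB x y l; rewrite !in_setI => /andP[Ax Bx] /andP[Ay By].
by rewrite (cA _ _ _ Ax Ay) (cB _ _ _ Bx By).
Qed.

Section NormalCone.
Context {R : realType} {X : normedModType R}.

Lemma normal_cone_sum_sub (A B : set X) (xbar : X) :
  set_sum_fun (normal_cone xbar A) (normal_cone xbar B) `<=` normal_cone xbar (A `&` B).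
Proof.
move=> _ [f [g [[[f_scalar f_cont] fA] [[[g_scalar g_cont] gB] ->]]]].
split; [split|].
- by move=> a x y; rewrite f_scalar g_scalar; ring.
- by move=> x; apply: cvgD; [exact: f_cont | exact: g_cont].
- by move=> x [Ax Bx]; rewrite -[0]addr0 lerD ?fA ?gB.
Qed.

Lemma normal_cone_setI_nbhs {Omega V : set X} {xbar : X} :
  convex_set Omega -> Omega xbar -> nbhs xbar V ->
  normal_cone xbar (Omega `&` V) = normal_cone xbar Omega.
Proof.
move=> cOmega Omega_xbar /nbhs_ballP[e /= e_gt0 eV].
apply/seteqP; split=> f [f_dual f_normal]; split=> // x; last first.
  by move=> [Ox _]; exact: f_normal.
move=> Ox; pose n := `|x - xbar|.
have en_gt0 : 0 < e + n := ltr_pwDl e_gt0 (normr_ge0 _).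
pose t := e / (e + n).
have t_gt0 : 0 < t by rewrite divr_gt0.
have t_le1 : t <= 1 by rewrite ler_pdivrMr // mul1r lerDl normr_ge0.
pose y := t *: x + (1 - t) *: xbar.
have yE : y - xbar = t *: (x - xbar).
  by rewrite /y scalerBl scale1r scalerBr addrA addrAC addrK.
have Vy : V y.
  apply: eV; rewrite -ball_normE /= distrC yE normrZ gtr0_norm //.
  by rewrite /t mulrAC ltr_pdivrMr // ltr_pM2l // ltrDr.
have Oy : Omega y.
  by apply: convex_comb cOmega Ox Omega_xbar (ltW t_gt0) _ _; rewrite ?subr_ge0 // addrC subrK.
have := f_normal y (conj Oy Vy).
by rewrite yE (scalable_linear f_dual.1) pmulr_rle0.
Qed.

End NormalCone.

Section DifferenceCone.
Context {R : realType} {X : normedModType R} {C D : set X} {xbar : X} {h : X -> R}.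
Hypothesis h_scalar : scalar h.

Let hB x y : h (x - y) = h x - h y := zmod_morphism_linear h_scalar x y.

Definition diff_cone : set (X * R) :=
  [set p | exists s c d,
     [/\ 0 < s, C c, D d, p.1 = s *: (c - d) & s * h (xbar - d) <= p.2]].

Lemma diff_cone_mem {c d} : C c -> D d -> diff_cone (c - d, h (xbar - d)).
Proof. by move=> Cc Dd; exists 1, c, d; rewrite scale1r mul1r. Qed.

Lemma diff_cone_scale a z t : 0 < a -> diff_cone (z, t) -> diff_cone (a *: z, a * t).
Proof.
move=> a_gt0 [s [c [d [s_gt0 Cc Dd /= -> st]]]].
exists (a * s), c, d; split => //=; first exact: mulr_gt0.
- by rewrite scalerA.
- by rewrite -mulrA ler_pM2l.
Qed.

Lemma diff_cone_add (C_convex : convex_set C) (D_convex : convex_set D) z t w u :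
  diff_cone (z, t) -> diff_cone (w, u) -> diff_cone (z + w, t + u).
Proof.
move=> [s [c [d [s_gt0 Cc Dd /= -> st]]]] [s' [c' [d' [s'_gt0 Cc' Dd' /= -> s'u]]]].
have ss'_gt0 : 0 < s + s' by rewrite addr_gt0.
pose l := s / (s + s'); pose m := s' / (s + s').
have l_ge0 : 0 <= l by rewrite divr_ge0 ?ltW.
have m_ge0 : 0 <= m by rewrite divr_ge0 ?ltW.
have lm : l + m = 1 by rewrite -mulrDl divff ?gt_eqF.
have sl : (s + s') * l = s by rewrite mulrC divfK ?gt_eqF.
have sm : (s + s') * m = s' by rewrite mulrC divfK ?gt_eqF.
have combB (a b a' b' : X) :
    l *: a + m *: b - (l *: a' + m *: b') = l *: (a - a') + m *: (b - b').
  by rewrite !scalerBr opprD addrACA.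
exists (s + s'), (l *: c + m *: c'), (l *: d + m *: d'); split => //=.
- exact: convex_comb.
- exact: convex_comb.
- by rewrite combB [RHS]scalerDr !scalerA sl sm.
- have -> : xbar = l *: xbar + m *: xbar by rewrite -scalerDl lm scale1r.
  rewrite combB h_scalar (scalable_linear h_scalar) mulrDr (mulrA _ l) (mulrA _ m) sl sm.
  exact: lerD.
Qed.

Lemma diff_cone_ge0 : (forall x, C x -> D x -> h (x - xbar) <= 0) ->
  forall t, diff_cone (0, t) -> 0 <= t.
Proof.
move=> h_normal t [s [c [d [s_gt0 Cc Dd /= /esym/eqP cd0 st]]]].
move: cd0; rewrite scaler_eq0 gt_eqF //= subr_eq0 => /eqP cd; rewrite cd in Cc.
have := h_normal d Cc Dd; rewrite !hB in st * => hd.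
by apply: le_trans st; apply: mulr_ge0; [exact: ltW | rewrite subr_ge0 -subr_le0].
Qed.

Hypothesis zero_interior : interior (set_diff_mink C D) 0.

Let diff_ball : exists2 r, 0 < r & forall z, `|z| < r -> set_diff_mink C D z.
Proof. by have /nbhs_norm0P[r r_gt0 rS] := zero_interior; exists r. Qed.

Lemma diff_cone_total z : exists t, diff_cone (z, t).
Proof.
have [r r_gt0 rS] := diff_ball; pose s := (`|z| + 1) / r.
have z1_gt0 : 0 < `|z| + 1 by rewrite ltr_pwDr.
have s_gt0 : 0 < s by rewrite divr_gt0.
have [c [d [Cc [Dd cdE]]]] : set_diff_mink C D (s^-1 *: z).
  apply: rS; rewrite normrZ gtr0_norm ?invr_gt0 // invf_div.
  by rewrite mulrAC ltr_pdivrMr // ltr_pM2l // ltrDl.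
exists (s * h (xbar - d)), s, c, d; split => //=.
by rewrite -cdE scalerA divff ?gt_eqF ?scale1r.
Qed.

Lemma diff_cone_dominated_continuous {l : X -> R} : scalar l ->
  (forall z t, diff_cone (z, t) -> l z <= t) ->
  continuous h -> bounded_set D -> continuous l.
Proof.
move=> l_scalar l_dom h_cont D_bounded.
have [M hM] := continuous_scalar_bounded h_scalar _ h_cont D_bounded.
have [r r_gt0 rS] := diff_ball.
apply: (scalar_ub_continuous l_scalar _ (h xbar + M) r_gt0) => _ /rS[c [d [Cc [Dd ->]]]].
apply: le_trans (l_dom _ _ (diff_cone_mem Cc Dd)) _.
rewrite hB lerD2l; apply: le_trans (hM d Dd); rewrite -normrN; exact: ler_norm.
Qed.

End DifferenceCone.
Arguments diff_cone {R X} C D xbar h.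

Theorem theorem3p1 (R : realType) (X : normedModType R)
    (Omega1 Omega2 : set X) (xbar : X) :
  convex_set Omega1 -> convex_set Omega2 ->
  Omega1 xbar -> Omega2 xbar ->
  (exists V : set X,
      convex_set V /\ bounded_set V /\ nbhs xbar V /\
      (interior (set_diff_mink Omega1 (Omega2 `&` V))) 0) ->
  normal_cone xbar (Omega1 `&` Omega2) =
    set_sum_fun (normal_cone xbar Omega1) (normal_cone xbar Omega2).
Proof.
move=> Omega1_convex Omega2_convex Omega1_xbar Omega2_xbar.
move=> [V [V_convex [V_bounded [V_nbhs zero_interior]]]].
apply/seteqP; split; last exact: normal_cone_sum_sub.
move=> h [[h_scalar h_cont] h_normal].
pose D := Omega2 `&` V.
have D_convex : convex_set D := convex_setI Omega2_convex V_convex.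
have D_bounded : bounded_set D by move: V_bounded => /=; apply: filterS => M VM x [_ /VM].
have [l [l_scalar l_dom]] := cone_hahn_banach
  (diff_cone_add (xbar := xbar) h_scalar Omega1_convex D_convex) diff_cone_scale
  (diff_cone_total zero_interior)
  (diff_cone_ge0 h_scalar (fun x (O1x : Omega1 x) (Dx : D x) => h_normal x (conj O1x Dx.1))).
have l_cont :=
  diff_cone_dominated_continuous h_scalar zero_interior l_scalar l_dom h_cont D_bounded.
have l_le c d : Omega1 c -> D d -> l (c - d) <= h (xbar - d).
  by move=> Cc Dd; exact: l_dom (diff_cone_mem Cc Dd).
have hB := zmod_morphism_linear h_scalar; have lB := zmod_morphism_linear l_scalar.
exists l, (fun x => h x - l x); split; [|split].
- split=> // c O1c.
  have D_xbar : D xbar := conj Omega2_xbar (nbhs_singleton V_nbhs).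
  by have := l_le c xbar O1c D_xbar; rewrite hB subrr.
- rewrite -(normal_cone_setI_nbhs Omega2_convex Omega2_xbar V_nbhs); split.
    split=> [a x y|x]; first by rewrite h_scalar l_scalar; ring.
    exact: cvgB (h_cont x) (l_cont x).
  by move=> d Dd; have := l_le xbar d Omega1_xbar Dd; rewrite !hB !lB; lra.
- by apply/funext => x; rewrite addrC subrK.
Qed.
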